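(* For all formulas $\varphi,\psi$: $\varphi,\varphi^{*}\vdash_{\mathsf{NeL}+\{\mathrm{(DI)}^s\}}\psi$.
   Context: Formulas are built from a countably infinite set of variables using binary $\otimes,\circ$ and unary ${}^{*}$. Abbreviations: $\varphi\Rightarrow\psi:=(\varphi\circ\psi^{*})^{*}$; $\varphi\Leftrightarrow\psi:=(\varphi\Rightarrow\psi)\otimes(\psi\Rightarrow\varphi)$; $\varphi\not\Leftrightarrow\psi:=(\varphi\Leftrightarrow\psi)^{*}$; $\varphi\not\Leftrightarrow\psi\not\Leftrightarrow\chi:=((\varphi\not\Leftrightarrow\psi)\otimes(\varphi\not\Leftrightarrow\chi))\otimes(\psi\not\Leftrightarrow\chi)$; $\varphi\oplus\psi:=(\varphi^{*}\otimes\psi^{*})^{*}$. $\mathsf{NeL}$: axiom schemes (A1) $\varphi\Rightarrow\varphi$; (A2) $(\varphi\circ\psi)\Rightarrow(\psi\circ\varphi)$; (A3) $\varphi\Rightarrow\varphi^{**}$; (A4) $(\varphi\Rightarrow\psi)\Rightarrow(\varphi\circ\psi)$; (A5) $(\varphi\otimes\psi)\Leftrightarrow(\psi\otimes\varphi)$; (A6) $((\varphi\otimes\psi)\Rightarrow\chi)\Rightarrow((\varphi\otimes\chi^{*})\Rightarrow\psi^{*})$; (A7) $(\varphi\not\Leftrightarrow\psi\not\Leftrightarrow\chi)\Rightarrow((\varphi\Rightarrow\psi)\Rightarrow((\psi\Rightarrow\chi)\Rightarrow(\varphi\Rightarrow\chi)))$; rules on arbitrary formulas: $\varphi\Rightarrow\psi,\varphi/\psi$;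 $\varphi,\psi/\varphi\otimes\psi$; $\varphi\Leftrightarrow\psi,\chi/\chi'$ ($\chi'$ from $\chi$ replacing one or more occurrences of $\varphi$ by $\psi$); $\varphi\otimes\psi/\varphi$. $\Gamma\vdash\varphi$ means derivability from $\Gamma$ and axiom instances. $\mathsf{NeL}+\{\mathrm{(DI)}^s\}$ adds the rule $\varphi/\varphi\oplus\psi$. *)

From Stdlib Require Import List.

Inductive form : Type :=
| Var : nat -> form
| Ten : form -> form -> form
| Cir : form -> form -> form
| Neg : form -> form.

Definition Imp (a b : form) : form := Neg (Cir a (Neg b)).
Definition Iff (a b : form) : form := Ten (Imp a b) (Imp b a).
Definition NIff (a b : form) : form := Neg (Iff a b).
Definition NIff3 (a b c : form) : form :=
  Ten (Ten (NIff a b) (NIff a c)) (NIff b c).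
Definition Oplus (a b : form) : form := Neg (Ten (Neg a) (Neg b)).

Inductive axiom : form -> Prop :=
| A1 a : axiom (Imp a a)
| A2 a b : axiom (Imp (Cir a b) (Cir b a))
| A3 a : axiom (Imp a (Neg (Neg a)))
| A4 a b : axiom (Imp (Imp a b) (Cir a b))
| A5 a b : axiom (Iff (Ten a b) (Ten b a))
| A6 a b c : axiom (Imp (Imp (Ten a b) c) (Imp (Ten a (Neg c)) (Neg b)))
| A7 a b c : axiom (Imp (NIff3 a b c)
                        (Imp (Imp a b) (Imp (Imp b c) (Imp a c)))).

(* repl0 a b x y : y arises from x by replacing zero or more occurrences
   of a by b;  repl a b x y : at least one occurrence is replaced. *)
Inductive repl0 (a b : form) : form -> form -> Prop :=
| R0_refl x : repl0 a b x x
| R0_here : repl0 a b a b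
| R0_Ten x1 x2 y1 y2 : repl0 a b x1 y1 -> repl0 a b x2 y2 ->
    repl0 a b (Ten x1 x2) (Ten y1 y2)
| R0_Cir x1 x2 y1 y2 : repl0 a b x1 y1 -> repl0 a b x2 y2 ->
    repl0 a b (Cir x1 x2) (Cir y1 y2)
| R0_Neg x y : repl0 a b x y -> repl0 a b (Neg x) (Neg y).

Inductive repl (a b : form) : form -> form -> Prop :=
| R_here : repl a b a b
| R_TenL x1 x2 y1 y2 : repl a b x1 y1 -> repl0 a b x2 y2 ->
    repl a b (Ten x1 x2) (Ten y1 y2)
| R_TenR x1 x2 y1 y2 : repl0 a b x1 y1 -> repl a b x2 y2 ->
    repl a b (Ten x1 x2) (Ten y1 y2)
| R_CirL x1 x2 y1 y2 : repl a b x1 y1 -> repl0 a b x2 y2 ->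
    repl a b (Cir x1 x2) (Cir y1 y2)
| R_CirR x1 x2 y1 y2 : repl0 a b x1 y1 -> repl a b x2 y2 ->
    repl a b (Cir x1 x2) (Cir y1 y2)
| R_Neg x y : repl a b x y -> repl a b (Neg x) (Neg y).

Inductive der_DI (Gamma : form -> Prop) : form -> Prop :=
| d_hyp a : Gamma a -> der_DI Gamma a
| d_ax a : axiom a -> der_DI Gamma a
| d_mp a b : der_DI Gamma (Imp a b) -> der_DI Gamma a -> der_DI Gamma b
| d_adj a b : der_DI Gamma a -> der_DI Gamma b -> der_DI Gamma (Ten a b)
| d_rep a b c c' : der_DI Gamma (Iff a b) -> der_DI Gamma c -> repl a b c c' ->
    der_DI Gamma c'
| d_simp a b : der_DI Gamma (Ten a b) -> der_DI Gamma a
| d_DI a b : der_DI Gamma a -> der_DI Gamma (Oplus a b).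


(* Write ¬ for the unary connective.  With (DI)^s, the premise φ yields
   φ ⊕ t = ¬(¬φ ⊗ ¬t); together with ¬φ the contraposition axiom (A6) then
   gives ¬¬t for every t.  A second use of (A6), now with (A3), turns these
   double negations into every negation ¬χ.  Since ¬¬ψ ⇒ ψ is itself a
   negation, modus ponens with ¬¬ψ gives ψ. *)

Section Contraposition.
Variable Gamma : form -> Prop.

Lemma der_contra (a b c : form) :
  der_DI Gamma (Imp (Ten a b) c) -> der_DI Gamma (Ten a (Neg c)) ->
  der_DI Gamma (Neg b).
Proof.
intros Habc Hac.
apply (d_mp _ (Ten a (Neg c))); [|exact Hac].
apply (d_mp _ (Imp (Ten a b) c)); [apply d_ax, A6 | exact Habc].
Qed.

Lemma der_neg_of_ten_neg_ten (a b : form) :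
  der_DI Gamma (Ten a (Neg (Ten a b))) -> der_DI Gamma (Neg b).
Proof. apply der_contra; apply d_ax, A1. Qed.

Lemma der_neg_of_ten_neg3_ten (a b : form) :
  der_DI Gamma (Ten a (Neg (Neg (Neg (Ten a b))))) -> der_DI Gamma (Neg b).
Proof. apply der_contra; apply d_ax, A3. Qed.

End Contraposition.

Section Explosion.
Variables (Gamma : form -> Prop) (phi : form).
Hypotheses (Hphi : der_DI Gamma phi) (Hnphi : der_DI Gamma (Neg phi)).

Lemma der_dneg_any (t : form) : der_DI Gamma (Neg (Neg t)).
Proof.
apply (der_neg_of_ten_neg_ten _ (Neg phi)).
apply d_adj; [exact Hnphi | exact (d_DI _ phi t Hphi)].
Qed.

Lemma der_neg_any (b : form) : der_DI Gamma (Neg b).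
Proof.
apply (der_neg_of_ten_neg3_ten _ phi).
apply d_adj; [exact Hphi | apply der_dneg_any].
Qed.

Lemma der_any (psi : form) : der_DI Gamma psi.
Proof.
apply (d_mp _ (Neg (Neg psi))); [apply der_neg_any | apply der_dneg_any].
Qed.

End Explosion.

Theorem proposition5p13 (phi psi : form) :
  der_DI (fun x => x = phi \/ x = Neg phi) psi.
Proof. apply (der_any _ phi); apply d_hyp; auto. Qed.
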